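(* Let $\mathcal{H}$ be a hypertree and $T$ a host tree of $\mathcal{H}$. Then $\mathcal{H}$ is a basic hypertree if and only if for every edge $uv$ of $T$ and every vertex $x\notin I_\mathcal{H}(uv)$ there exists a vertex $y$ such that some edge of $\mathcal{H}$ contains $\{u,v,y\}$ and no edge of $\mathcal{H}$ contains $\{x,y\}$. Equivalently, $\mathcal{H}$ is basic if and only if for every basic set $B$ of $\mathcal{H}$ and every vertex $x\notin B$ there exists a vertex $y$ such that some edge of $\mathcal{H}$ contains $B\cup\{y\}$ and no edge of $\mathcal{H}$ contains $\{x,y\}$.
   Context: A hypergraph $\mathcal{H}$ has a finite vertex set $V(\mathcal{H})$ and a finite family of nonempty subsets (edges). A host tree of $\mathcal{H}$ is a tree on $V(\mathcal{H})$ in which every edge induces a connected subgraph; a hypertree is a hypergraph with a host tree. Hypergraphs on the same vertex set are equivalent if they have the same host trees. $\mathcal{N}(\mathcal{H})$ is the hypergraph on $V(\mathcal{H})$ having, for each $v\in V(\mathcal{H})$, the edge equal to the union of all edges of $\mathcal{H}$ containing $v$. A basic hypertree is a hypertree $\mathcal{H}$ equivalent to $\mathcal{N}(\mathcal{H})$. For $V'\subseteq V(\mathcal{H})$, $I_\mathcal{H}(V')$ is the intersection of all edges containing $V'$, or $V(\mathcal{H})$ if none does; $I_\mathcal{H}(uv)=I_\mathcal{H}(\{u,v\})$. A union of sets is connected if the intersection graph of the sets is connected. $Comp(\mathcal{H})$ is the hypergraph without repeated edges on $V(\mathcal{H})$ whose edges are $V(\mathcal{H})$, all singletons, and all proper subsets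 obtainable from edges of $\mathcal{H}$ by repeated nonempty intersections and connected unions; a basic set of $\mathcal{H}$ is an edge of $Comp(\mathcal{H})$ with more than one vertex that is not a connected union of strictly smaller edges of $Comp(\mathcal{H})$. *)

From mathcomp Require Import all_boot.
Set Implicit Arguments. Unset Strict Implicit. Unset Printing Implicit Defensive.

(* A hypergraph on the finite vertex set V (= the whole finType) is given by
   its family of edges H : {set {set V}}. *)

Section Hyper.
Variable V : finType.

Definition simple_graph (e : rel V) : Prop :=
  (forall x y, e x y = e y x) /\ (forall x, ~~ e x x).

Definition graph_connected (e : rel V) : Prop := forall x y, connect e x y.

Definition acyclic (e : rel V) : Prop :=
  forall s : seq V, 2 < size s -> uniq s -> ~~ cycle e s.

Definition is_tree (e : rel V) : Prop :=
  simple_graph e /\ graph_connected e /\ acyclic e.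

Definition induced (e : rel V) (F : {set V}) : rel V :=
  [rel a b | [&& e a b, a \in F & b \in F]].

Definition induces_connected (e : rel V) (F : {set V}) : Prop :=
  forall x y, x \in F -> y \in F -> connect (induced e F) x y.

Definition host_tree (H : {set {set V}}) (e : rel V) : Prop :=
  is_tree e /\ forall F, F \in H -> induces_connected e F.

Definition hypertree (H : {set {set V}}) : Prop := exists e, host_tree H e.

Definition equivalent (H1 H2 : {set {set V}}) : Prop :=
  forall e : rel V, host_tree H1 e <-> host_tree H2 e.

Definition Nhyp (H : {set {set V}}) : {set {set V}} :=
  [set \bigcup_(F in H | v \in F) F | v : V].

Definition basic_hypertree (H : {set {set V}}) : Prop :=
  hypertree H /\ equivalent H (Nhyp H).

(* I_H(S): intersection of all edges containing S; an empty \bigcap is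
   [set: V], which is exactly the convention "V(H) if no edge contains S". *)
Definition IH (H : {set {set V}}) (S : {set V}) : {set V} :=
  \bigcap_(F in H | S \subset F) F.

Definition family_connected (P : {set {set V}}) : Prop :=
  forall A B, A \in P -> B \in P ->
    connect [rel X Y | [&& X \in P, Y \in P & X :&: Y != set0]] A B.

Inductive obtainable (H : {set {set V}}) : {set V} -> Prop :=
  | obt_edge F : F \in H -> obtainable H F
  | obt_int A B : obtainable H A -> obtainable H B -> A :&: B != set0 ->
      obtainable H (A :&: B)
  | obt_union (P : {set {set V}}) : P != set0 ->
      (forall A, A \in P -> obtainable H A) -> family_connected P ->
      obtainable H (cover P).

Definition comp_edge (H : {set {set V}}) (X : {set V}) : Prop :=
  X = [set: V] \/ #|X| = 1 \/ (X \proper [set: V] /\ obtainable H X).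

Definition basic_set (H : {set {set V}}) (B : {set V}) : Prop :=
  comp_edge H B /\ 1 < #|B| /\
  ~ (exists P : {set {set V}},
       [/\ P != set0, family_connected P, cover P = B &
           forall A, A \in P -> comp_edge H A /\ A \proper B]).

End Hyper.

(* In a tree, a vertex set induces a connected subgraph iff it is convex: it
   contains both ends of every edge ab whose two sides it meets.  Every host tree
   of H is one of N(H), so H is basic iff each host tree S of N(H) makes the edges
   of H convex.  A set X separated, as in the two conditions, from every vertex
   outside it is the intersection of the edges of N(H) containing it, hence convex
   in S.  An edge of H is the connected union of the sets I(uv), uv an edge of T
   inside it, and an edge of Comp(H) is basic or a connected union of smaller
   ones; so either condition makes H basic.  Conversely, if the first condition
   fails at a tree edge uv and a vertex x on the side of u, replacing uv by xv
   gives a host tree of N(H) disconnecting an edge of H that contains u and v but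
   not x.  Finally a basic set B is some I(uv) with uv an edge of T inside B, for
   otherwise these sets would decompose B. *)

From mathcomp Require Import all_boot.
From Stdlib Require Import Classical.
Set Implicit Arguments. Unset Strict Implicit. Unset Printing Implicit Defensive.

Lemma connect_invariant (T : finType) (g : rel T) (P : pred T) :
  (forall c d, P c -> g c d -> P d) -> forall c d, connect g c d -> P c -> P d.
Proof.
move=> stepP c _ /connectP [s pth ->]; elim: s c pth => [|y s IHs] c //=.
by case/andP=> gcy pth Pc; apply: IHs pth (stepP _ _ Pc gcy).
Qed.

Section Graphs.
Variable V : finType.
Implicit Types (g e : rel V) (a b c d u v x z : V) (Z : {set V}).

Definition same_edge a b c d := ((c == a) && (d == b)) || ((c == b) && (d == a)).

Lemma same_edgeC a b c d : same_edge a b c d = same_edge b a c d.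
Proof. by rewrite /same_edge orbC. Qed.

Lemma same_edge_sym a b c d : same_edge a b c d = same_edge a b d c.
Proof. by rewrite /same_edge orbC [(c == b) && _]andbC [(c == a) && _]andbC. Qed.

Lemma same_edgeP a b c d :
  reflect ((c, d) = (a, b) \/ (c, d) = (b, a)) (same_edge a b c d).
Proof.
rewrite /same_edge; apply: (iffP orP).
- by case=> /andP [/eqP-> /eqP->]; [left|right].
- by case=> -[-> ->]; rewrite !eqxx; [left|right].
Qed.

Lemma same_edge_comm a b c d : same_edge a b c d = same_edge c d a b.
Proof.
by apply/same_edgeP/same_edgeP => -[] [-> ->]; [left | right | left | right].
Qed.

Definition del_edge g a b : rel V := [rel c d | g c d && ~~ same_edge a b c d].
Definition add_edge g a b : rel V := [rel c d | g c d || same_edge a b c d].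

Lemma del_edgeC g a b : del_edge g a b =2 del_edge g b a.
Proof. by move=> c d; rewrite /del_edge /= same_edgeC. Qed.

Lemma del_edge_sym g a b : symmetric g -> symmetric (del_edge g a b).
Proof. by move=> gsym c d; rewrite /del_edge /= gsym same_edge_sym. Qed.

Lemma add_edge_sym g a b : symmetric g -> symmetric (add_edge g a b).
Proof. by move=> gsym c d; rewrite /add_edge /= gsym same_edge_sym. Qed.

Lemma path_del_edge g a b c s :
  a \notin c :: s -> path g c s -> path (del_edge g a b) c s.
Proof.
elim: s c => [|y s IHs] c //=; rewrite !inE !negb_or => /and3P [ac ay aNs] /andP [gcy pth].
rewrite IHs ?inE ?negb_or ?ay // andbT /del_edge /= gcy /=.
by apply/same_edgeP => -[] [ca ya]; rewrite ?ca ?ya ?eqxx in ac ay.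
Qed.

Lemma induced_connect_sym g (F : {set V}) : symmetric g -> connect_sym (induced g F).
Proof.
by move=> gsym; apply: sym_connect_sym => c d; rewrite /induced /= gsym [(c \in _) && _]andbC.
Qed.

Definition side g a b : {set V} := [set z | connect (del_edge g a b) a z].

Lemma side_refl g a b : a \in side g a b.
Proof. by rewrite inE connect0. Qed.

Lemma side_step g a b c d :
  c \in side g a b -> del_edge g a b c d -> d \in side g a b.
Proof. by rewrite !inE => /connect_trans + /connect1; apply. Qed.

Lemma side_exit g a b c d :
  c \in side g a b -> d \notin side g a b -> g c d -> same_edge a b c d.
Proof.
move=> cS dS gcd; apply: contraNT dS => nab.
by apply: side_step cS _; rewrite /del_edge /= gcd.
Qed.

Lemma del_edge_separated g a b Z : a \in Z -> b \notin Z ->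
  (forall c d, c \in Z -> d \notin Z -> g c d -> same_edge a b c d) ->
  ~~ connect (del_edge g a b) a b.
Proof.
move=> aZ bZ exitZ; apply: contraNN bZ => /connect_invariant; apply=> // c d cZ.
case/andP=> gcd; apply: contraNT => dZ; exact: exitZ.
Qed.

Lemma bridges_acyclic g : symmetric g ->
  (forall a b, g a b -> ~~ connect (del_edge g a b) a b) -> acyclic g.
Proof.
move=> gsym bridge [|a [|c [|w s]]] // _; rewrite cons_uniq => /andP [aNs /andP [cNs _]].
rewrite /cycle rcons_path /=; apply/negP => /andP [/and3P [gac gcw pth] glast].
apply/negP: (bridge a c gac); rewrite (sym_connect_sym (del_edge_sym a c gsym)).
rewrite negbK; apply/connectP; exists (rcons (w :: s) a); last by rewrite last_rcons.
rewrite rcons_path path_del_edge //= ?gcw //.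
rewrite /del_edge /= glast /=; apply/negP => /same_edgeP [[lst _] | [lst]].
- by move: aNs; rewrite -lst in_cons mem_last orbT.
- by move: cNs; rewrite -lst mem_last.
Qed.

Section Tree.
Variable e : rel V.
Hypothesis e_tree : is_tree e.

Lemma tree_sym : symmetric e.
Proof. by case: e_tree => -[]. Qed.

Lemma tree_irr c : ~~ e c c.
Proof. by case: e_tree => -[]. Qed.

Lemma tree_connect c d : connect e c d.
Proof. by case: e_tree => _ []. Qed.

Lemma notin_side a b : e a b -> b \notin side e a b.
Proof.
move=> eab; rewrite inE; apply/negP => /connectP [p pth lst].
case/shortenP: pth lst => [[|c [|w s]]] pth uniq_p _ /= lst; subst b.
- by rewrite (negbTE (tree_irr a)) in eab.
- by move: pth; rewrite /= /del_edge /= eab /same_edge !eqxx.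
- case: e_tree => _ [_ /(_ [:: a, c, w & s] isT uniq_p)] /negP; apply.
  rewrite /cycle rcons_path tree_sym eab andbT.
  by apply: sub_path pth => ? ? /andP [].
Qed.

Lemma side_cover a b z : e a b -> (z \in side e a b) || (z \in side e b a).
Proof.
move=> eab.
apply: (connect_invariant (P := fun z => (z \in side e a b) || (z \in side e b a)))
  (tree_connect a z) _; last by rewrite side_refl.
move=> c d Pc ecd.
case nab: (same_edge a b c d).
- by case/same_edgeP: nab => -[_ ->]; rewrite side_refl ?orbT.
- have ecd' : del_edge e a b c d by rewrite /del_edge /= ecd nab.
  case/orP: Pc => Sc; first by rewrite (side_step Sc ecd').
  by rewrite (side_step Sc) ?orbT // -del_edgeC.
Qed.

Lemma side_disjoint a b z : e a b -> z \in side e a b -> z \notin side e b a.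
Proof.
move=> eab; rewrite !inE (eq_connect (del_edgeC e b a)) => az; apply: contraL (notin_side eab).
have csym := sym_connect_sym (del_edge_sym a b tree_sym).
by rewrite inE csym negbK => /(connect_trans az).
Qed.

Lemma side_compl a b : e a b -> side e b a = ~: side e a b.
Proof.
move=> eab; apply/setP => z; rewrite in_setC.
case/orP: (side_cover z eab) => zS; first by rewrite zS (negbTE (side_disjoint eab zS)).
have eba : e b a by rewrite tree_sym.
by rewrite zS (side_disjoint eba zS).
Qed.

Definition convex (F : {set V}) := forall a b p q, e a b ->
  p \in F -> q \in F -> p \in side e a b -> q \in side e b a -> a \in F.

Lemma convex_edge (F : {set V}) a b p q : convex F -> e a b ->
  p \in F -> q \in F -> p \in side e a b -> q \in side e b a -> (a \in F) && (b \in F).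
Proof.
move=> convF eab pF qF pS qS; rewrite (convF a b p q) //=.
by apply: (convF b a q p); rewrite // tree_sym.
Qed.

Lemma connected_convex (F : {set V}) : induces_connected e F -> convex F.
Proof.
move=> connF a b p q eab pF qF pS; apply: contraTT => aF; apply: (side_disjoint eab).
apply: (connect_invariant (P := mem (side e a b))) (connF p q pF qF) pS.
move=> c d cS /and3P [ecd cF dF]; apply: (side_step cS); rewrite /del_edge /= ecd /=.
by apply: contra aF => /same_edgeP [] [ca db]; rewrite -?ca -?db.
Qed.

Lemma convex_connected (F : {set V}) : convex F -> induces_connected e F.
Proof.
move=> convF x y xF yF; case/connectP: (tree_connect x y) => p pth lst.
case/shortenP: pth lst => {}p pth uniq_p _ lst; subst y.
elim: p x xF pth uniq_p yF => [|z s IHs] x xF /=; first by rewrite connect0.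
case/andP=> exz pth /andP [xNs uniq_s] lastF.
have zF : z \in F.
  have lastS : last z s \in side e z x.
    by rewrite inE; apply/connectP; exists s; rewrite // (eq_path (del_edgeC e z x)) path_del_edge.
  by apply: (convF z x (last z s) x); rewrite ?side_refl // tree_sym.
apply: connect_trans (IHs z zF pth uniq_s lastF).
by apply: connect1; rewrite /induced /= exz xF zF.
Qed.

Lemma convexP (F : {set V}) : induces_connected e F <-> convex F.
Proof. by split; [apply: connected_convex | apply: convex_connected]. Qed.

Lemma side_connected a b : induces_connected e (side e a b).
Proof.
have lift c d : connect (del_edge e a b) c d -> c \in side e a b ->
    connect (induced e (side e a b)) c d.
  case/connectP=> s pth ->; elim: s c pth => [|y s IHs] c /=; first by rewrite connect0.
  case/andP=> cy pth cS; have yS := side_step cS cy.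
  apply: connect_trans (IHs y pth yS); apply: connect1.
  by case/andP: cy => ecy _; rewrite /induced /= ecy cS yS.
move=> z1 z2; rewrite !inE => /lift z1S /lift z2S.
apply: connect_trans (z2S (side_refl e a b)).
by rewrite induced_connect_sym ?z1S ?side_refl //; apply: tree_sym.
Qed.

Lemma convex_side a b : convex (side e a b).
Proof. exact/convexP/side_connected. Qed.

Lemma convexI (F G : {set V}) : convex F -> convex G -> convex (F :&: G).
Proof.
move=> convF convG a b p q eab /setIP [pF pG] /setIP [qF qG] pS qS.
by rewrite inE (convF a b p q) ?(convG a b p q).
Qed.

Lemma convexT : convex [set: V].
Proof. by move=> *; rewrite inE. Qed.

Lemma convex_card_le1 (F : {set V}) : #|F| <= 1 -> convex F.
Proof.
move=> /card_le1_eqP F1 a b p q eab pF qF pS qS.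
by move: (side_disjoint eab pS); rewrite -(F1 p q pF qF) qS.
Qed.

Lemma convex_cover_edge (P : {set {set V}}) a b p q :
  family_connected P -> {in P, forall A, convex A} -> e a b ->
  p \in cover P -> q \in cover P -> p \in side e a b -> q \in side e b a ->
  exists2 A, A \in P & (a \in A) && (b \in A).
Proof.
move=> connP convP eab /bigcupP [A1 A1P pA1] /bigcupP [A2 A2P qA2] pS qS.
case: (boolP [exists A in P, (a \in A) && (b \in A)]) => [/exists_inP // | noA].
have crossing A z w : A \in P -> z \in A -> w \in A -> z \in side e a b -> w \in side e b a -> False.
  move=> AP zA wA zS wS; apply: (negP noA); apply/exists_inP; exists A => //.
  exact: convex_edge (convP A AP) eab zA wA zS wS.
have meetsA1 : A1 :&: side e a b != set0 by apply/set0Pn; exists p; rewrite inE pA1.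
have /set0Pn [z /setIP [zA2 zS]] : A2 :&: side e a b != set0.
  apply: (connect_invariant (P := fun A => A :&: side e a b != set0)) (connP _ _ A1P A2P) meetsA1.
  move=> A B /set0Pn [z /setIP [zA zS]] /and3P [AP BP /set0Pn [w /setIP [wA wB]]].
  apply/set0Pn; exists w; rewrite in_setI wB /=; apply: contraT => wS.
  by case: (crossing A z w AP zA wA zS); rewrite (side_compl eab) in_setC.
by case: (crossing A2 z q A2P zA2 qA2 zS qS).
Qed.

Lemma convex_cover (P : {set {set V}}) :
  family_connected P -> {in P, forall A, convex A} -> convex (cover P).
Proof.
move=> connP convP a b p q eab pP qP pS qS.
have [A AP /andP [aA _]] := convex_cover_edge connP convP eab pP qP pS qS.
by apply/bigcupP; exists A.
Qed.

Section EdgeSwap.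
Variables u v x : V.
Hypotheses (euv : e u v) (xU : x \in side e u v).

Definition edge_swap := add_edge (del_edge e u v) x v.

Let evu : e v u. Proof. by rewrite tree_sym. Qed.

Lemma edge_swap_sym : symmetric edge_swap.
Proof. exact/add_edge_sym/del_edge_sym/tree_sym. Qed.

Lemma edge_swapE c d : edge_swap c d = del_edge e u v c d || same_edge x v c d.
Proof. by []. Qed.

Lemma edge_swap_connected : graph_connected edge_swap.
Proof.
have lift c d : connect (del_edge e u v) c d -> connect edge_swap c d.
  by apply: connect_sub => c' d' cd; apply: connect1; rewrite edge_swapE cd.
have from_u z : connect edge_swap u z.
  case/orP: (side_cover z euv); rewrite inE; first exact: lift.
  rewrite (eq_connect (del_edgeC e v u)) => /lift; apply: connect_trans.
  have ux : connect edge_swap u x by apply: lift; move: xU; rewrite inE.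
  by apply: connect_trans ux (connect1 _); rewrite edge_swapE /same_edge !eqxx orbT.
move=> c d; apply: connect_trans (from_u d).
by rewrite (sym_connect_sym edge_swap_sym) from_u.
Qed.

Lemma edge_swap_bridgeC a b :
  connect (del_edge edge_swap a b) a b = connect (del_edge edge_swap b a) b a.
Proof.
by rewrite (eq_connect (del_edgeC _ a b)) (sym_connect_sym (del_edge_sym b a edge_swap_sym)).
Qed.

Lemma new_edge_bridge : ~~ connect (del_edge edge_swap x v) x v.
Proof.
apply: (del_edge_separated (Z := side e u v)) => // [|c d cU dU]; first exact: notin_side.
by rewrite edge_swapE => /orP [cd | //]; rewrite (side_step cU cd) in dU.
Qed.

Lemma old_edge_bridge_same_side a b : del_edge e u v a b ->
  (x \in side e a b) = (v \in side e a b) -> ~~ connect (del_edge edge_swap a b) a b.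
Proof.
case/andP=> eab _ xvA; apply: (del_edge_separated (Z := side e a b)) => [||c d cA dA].
- exact: side_refl.
- exact: notin_side.
rewrite edge_swapE => /orP [/andP [ecd _] | /same_edgeP [] [cx dv]].
- exact: side_exit cA dA ecd.
- by move: cA dA; rewrite cx dv xvA => ->.
- by move: cA dA; rewrite cx dv xvA => ->.
Qed.

Lemma old_edge_bridge_opposite_sides a b : del_edge e u v a b ->
  x \in side e a b -> v \notin side e a b -> ~~ connect (del_edge edge_swap a b) a b.
Proof.
case/andP=> eab nab xA vA.
have vB : v \in side e b a by rewrite (side_compl eab) inE.
have uB : u \in side e b a.
  by apply: (side_step vB); rewrite /del_edge /= evu same_edge_comm same_edge_sym same_edgeC.
(* ab lies on the tree path from x to u, so b is on the side of u. *)
have /andP [_ bU] := convex_edge (@convex_side u v) eab xU (side_refl e u v) xA uB.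
apply: (del_edge_separated (Z := side e a b :|: side e v u)) => [||c d].
- by rewrite in_setU side_refl.
- by rewrite in_setU negb_or notin_side ?side_disjoint.
rewrite !in_setU negb_or => cZ /andP [dA dW]; rewrite edge_swapE => /orP [cd | /same_edgeP].
- case/orP: cZ => cS; first by apply: side_exit cS dA _; case/andP: cd.
  by move: dW; rewrite (side_step cS) // -(del_edgeC e u v).
- by case=> -[_ dx]; rewrite dx ?side_refl ?xA in dA dW.
Qed.

Lemma edge_swap_bridge a b : edge_swap a b -> ~~ connect (del_edge edge_swap a b) a b.
Proof.
case/orP=> [abuv | /same_edgeP [] [-> ->]]; last 2 first.
- exact: new_edge_bridge.
- by rewrite edge_swap_bridgeC new_edge_bridge.
have eab : e a b by case/andP: abuv.
case: (boolP (x \in side e a b)) => xA; case: (boolP (v \in side e a b)) => vA.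
- by apply: old_edge_bridge_same_side abuv _; rewrite xA vA.
- exact: old_edge_bridge_opposite_sides.
- rewrite edge_swap_bridgeC; apply: old_edge_bridge_opposite_sides.
  + by rewrite del_edge_sym //; apply: tree_sym.
  + by rewrite (side_compl eab) inE.
  + by rewrite (side_compl eab) inE negbK.
- by apply: old_edge_bridge_same_side abuv _; rewrite (negbTE xA) (negbTE vA).
Qed.

Lemma edge_swap_tree : is_tree edge_swap.
Proof.
split; [split | split]; first exact: edge_swap_sym.
- move=> c; rewrite edge_swapE /del_edge /= (negbTE (tree_irr c)) /=.
  have xNv : x != v by apply: contraTneq xU => ->; apply: notin_side.
  by apply/negP => /same_edgeP [] [cx cv]; move: xNv; rewrite -cx -cv eqxx.
- exact: edge_swap_connected.
- exact: bridges_acyclic edge_swap_sym edge_swap_bridge.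
Qed.

Lemma edge_swap_induced_connected (F : {set V}) : induces_connected e F ->
  (u \in F -> v \in F -> x \in F) -> induces_connected edge_swap F.
Proof.
move=> connF uvx; have convF := connected_convex connF.
have within Y : convex Y -> ~~ ((u \in Y) && (v \in Y)) ->
    {in F :&: Y &, forall z1 z2, connect (induced edge_swap F) z1 z2}.
  move=> convY uvY z1 z2 z1FY z2FY.
  apply: connect_sub (convex_connected (convexI convF convY) z1FY z2FY) => c d.
  case/and3P=> ecd /setIP [cF cY] /setIP [dF dY]; apply: connect1.
  rewrite /induced /= cF dF !andbT edge_swapE /del_edge /= ecd /=.
  by apply/orP; left; apply: contra uvY => /same_edgeP [] [<- <-]; rewrite cY dY.
have inU := within _ (@convex_side u v) ltac:(by rewrite (negbTE (notin_side euv)) andbF).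
have inW := within _ (@convex_side v u) ltac:(by rewrite (negbTE (notin_side evu))).
have across z1 z2 : z1 \in F :&: side e u v -> z2 \in F :&: side e v u ->
    connect (induced edge_swap F) z1 z2.
  move=> z1FU z2FW; have /setIP [z1F z1U] := z1FU; have /setIP [z2F z2W] := z2FW.
  have /andP [uF vF] := convex_edge convF euv z1F z2F z1U z2W.
  have xF := uvx uF vF.
  apply: connect_trans (inU z1 x z1FU _) _; first by rewrite inE xF xU.
  apply: connect_trans (inW v z2 _ z2FW); last by rewrite inE vF side_refl.
  by apply: connect1; rewrite /induced /= xF vF edge_swapE /same_edge !eqxx orbT.
have csym := induced_connect_sym F edge_swap_sym.
move=> z1 z2 z1F z2F.
case/orP: (side_cover z1 euv) => z1S; case/orP: (side_cover z2 euv) => z2S.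
- by apply: inU; rewrite inE ?z1F ?z2F.
- by apply: across; rewrite inE ?z1F ?z2F.
- by rewrite csym; apply: across; rewrite inE ?z1F ?z2F.
- by apply: inW; rewrite inE ?z1F ?z2F.
Qed.

Lemma edge_swap_separates (F : {set V}) : u \in F -> v \in F -> x \notin F ->
  ~~ connect (induced edge_swap F) u v.
Proof.
move=> uF vF xF; apply: contraNN (notin_side euv) => /connect_invariant; apply; last first.
  exact: side_refl.
move=> c d cU /and3P []; rewrite edge_swapE => /orP [cd | /same_edgeP [] [-> ->]] cF dF.
- exact: side_step cU cd.
- by rewrite cF in xF.
- by rewrite dF in xF.
Qed.

End EdgeSwap.
End Tree.
End Graphs.

Section Hypergraph.
Variables (V : finType) (H : {set {set V}}).
Implicit Types (S T : rel V) (X Y : {set V}) (a u v x y z : V).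

Definition Nedge y := \bigcup_(F in H | y \in F) F.

Lemma NedgeP y z : reflect (exists2 F, F \in H & (y \in F) && (z \in F)) (z \in Nedge y).
Proof.
apply: (iffP bigcupP) => [[F /andP [FH yF] zF] | [F FH /andP [yF zF]]]; exists F => //.
- by rewrite yF.
- by rewrite FH.
Qed.

Lemma Nedge_Nhyp y : Nedge y \in Nhyp H.
Proof. exact: imset_f. Qed.

Lemma convex_Nedge T y : is_tree T -> {in H, forall F, convex T F} -> convex T (Nedge y).
Proof.
move=> trT convH a b p q Tab /NedgeP [F FH /andP [yF pF]] /NedgeP [G GH /andP [yG qG]] pS qS.
apply/NedgeP; case/orP: (side_cover trT y Tab) => yS.
- by exists G; rewrite // yG (convH G GH a b y q).
- by exists F; rewrite // yF (convH F FH a b p y).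
Qed.

Lemma host_tree_Nhyp T : host_tree H T -> host_tree (Nhyp H) T.
Proof.
case=> trT connH; split=> // _ /imsetP [y _ ->]; apply/(convexP trT)/convex_Nedge => //.
by move=> F FH; apply/(convexP trT)/connH.
Qed.

Lemma Nhost_convex_Nedge S y : host_tree (Nhyp H) S -> convex S (Nedge y).
Proof. by case=> trS connN; apply/(convexP trS)/connN/Nedge_Nhyp. Qed.

Lemma basic_hypertreeE : hypertree H ->
  basic_hypertree H <-> forall S, host_tree (Nhyp H) S -> host_tree H S.
Proof.
move=> hyperH; split=> [[_ equivN] S /equivN // | NhostH]; split=> // S.
by split; [apply: host_tree_Nhyp | apply: NhostH].
Qed.

Definition Nseparated X := forall a, a \notin X ->
  exists y, (exists2 F, F \in H & y |: X \subset F) /\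
            (forall F, F \in H -> ~~ ([set a; y] \subset F)).

(* X is the intersection of the edges of N(H) containing it. *)
Lemma Nseparated_convex S X :
  host_tree (Nhyp H) S -> Nseparated X -> convex S X.
Proof.
move=> hostS sepX a b p q Sab pX qX pS qS; apply: contraT => aX.
have [y [[G GH]]] := sepX a aX; rewrite subUset sub1set => /andP [yG XG] noF.
have XN : X \subset Nedge y.
  by apply/subsetP => z zX; apply/NedgeP; exists G; rewrite // yG (subsetP XG).
have /negP[] : a \notin Nedge y.
  by apply/NedgeP => -[F FH /andP [yF aF]]; move: (noF F FH); rewrite subUset !sub1set aF yF.
exact: (Nhost_convex_Nedge (y := y) hostS Sab (subsetP XN p pX) (subsetP XN q qX) pS qS).
Qed.

Lemma subset_IH X : X \subset IH H X.
Proof. by apply/bigcapsP => F /andP []. Qed.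

Lemma IH_subset X F : F \in H -> X \subset F -> IH H X \subset F.
Proof. by move=> FH XF; apply: bigcap_inf; rewrite FH XF. Qed.

Lemma notin_IH X x : x \notin IH H X -> exists2 F, F \in H & (X \subset F) && (x \notin F).
Proof.
move=> xI; apply/exists_inP; apply: contraR xI => /exists_inPn noF.
by apply/bigcapP => F /andP [FH XF]; move: (noF F FH); rewrite XF negbK.
Qed.

Lemma obtainable_IH X : X != set0 -> IH H X \proper [set: V] -> obtainable H (IH H X).
Proof.
case/set0Pn=> z zX; rewrite properT; suff [-> | [] //] :
    IH H X = [set: V] \/ obtainable H (IH H X) /\ z \in IH H X by rewrite eqxx.
apply: (big_ind (fun Y => Y = [set: V] \/ obtainable H Y /\ z \in Y)); first by left.
- move=> A B [-> | [oA zA]] [-> | [oB zB]]; rewrite ?setTI ?setIT; try by [left | right].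
  right; split; last by rewrite inE zA zB.
  by apply: obt_int => //; apply/set0Pn; exists z; rewrite inE zA zB.
- by move=> F /andP [FH XF]; right; split; [apply: obt_edge | apply: (subsetP XF)].
Qed.

Lemma mem_IH2l u v : u \in IH H [set u; v].
Proof. exact: subsetP (subset_IH _) u (set21 u v). Qed.

Lemma mem_IH2r u v : v \in IH H [set u; v].
Proof. exact: subsetP (subset_IH _) v (set22 u v). Qed.

Definition IH_closed T X :=
  forall u v, T u v -> u \in X -> v \in X -> IH H [set u; v] \subset X.

Lemma IH_closed_edge T F : F \in H -> IH_closed T F.
Proof. by move=> FH u v _ uF vF; apply: IH_subset; rewrite // subUset !sub1set uF vF. Qed.

Definition edge_closures T X : {set {set V}} :=
  [set IH H [set u; v] | u in X, v in [set v in X | T u v]] :|: [set [set z] | z in X].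

Lemma edge_closuresP T X A : A \in edge_closures T X ->
  (exists u v, [/\ T u v, u \in X, v \in X & A = IH H [set u; v]]) \/
  (exists2 z, z \in X & A = [set z]).
Proof.
case/setUP => [/imset2P [u v uX] | /imsetP [z zX ->]]; last by right; exists z.
by rewrite inE => /andP [vX Tuv] ->; left; exists u, v.
Qed.

Lemma set1_edge_closures T X z : z \in X -> [set z] \in edge_closures T X.
Proof. by move=> zX; apply/setUP; right; apply: imset_f. Qed.

Lemma IH_edge_closures T X u v : T u v -> u \in X -> v \in X ->
  IH H [set u; v] \in edge_closures T X.
Proof. by move=> Tuv uX vX; apply/setUP; left; apply: imset2_f; rewrite // inE vX. Qed.

Lemma cover_edge_closures T X : IH_closed T X -> cover (edge_closures T X) = X.
Proof.
move=> closedX; apply/setP => z; apply/bigcupP/idP => [[A] | zX].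
- by case/edge_closuresP=> [[u [v [Tuv uX vX ->]]] /(subsetP (closedX u v Tuv uX vX)) |
                             [w wX ->] /set1P ->].
- by exists [set z]; rewrite ?set1_edge_closures ?set11.
Qed.

Lemma edge_closures_connected T X : symmetric T -> induces_connected T X ->
  family_connected (edge_closures T X).
Proof.
move=> Tsym connX A B AP BP.
set R := [rel Y Z | [&& Y \in edge_closures T X, Z \in edge_closures T X & Y :&: Z != set0]].
have Rsym : connect_sym R.
  by apply: sym_connect_sym => Y Z /=; rewrite setIC andbCA.
have R_set1 Y z : Y \in edge_closures T X -> z \in X -> z \in Y -> R Y [set z].
  by move=> YP zX zY; rewrite /= YP set1_edge_closures //=; apply/set0Pn; exists z; rewrite !inE zY /=.
have to_set1 Y : Y \in edge_closures T X -> exists2 z, z \in X & connect R Y [set z].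
  move=> YP; case/edge_closuresP: (YP) => [[u [v [Tuv uX vX eY]]] | [z zX eY]].
  - by exists u => //; apply/connect1/R_set1; rewrite // eY mem_IH2l.
  - by exists z; rewrite // eY connect0.
have along z1 z2 : connect (induced T X) z1 z2 -> connect R [set z1] [set z2].
  case/connectP=> s pth ->; elim: s z1 pth => [|c s IHs] z1 /=; first by rewrite connect0.
  case/andP=> /and3P [Tz1c z1X cX] pth; apply: connect_trans (IHs c pth).
  have cP := IH_edge_closures Tz1c z1X cX.
  apply: (connect_trans (y := IH H [set z1; c])).
  - by rewrite Rsym; apply/connect1/R_set1; rewrite ?mem_IH2l.
  - by apply/connect1/R_set1; rewrite ?mem_IH2r.
have [z1 z1X AZ1] := to_set1 A AP; have [z2 z2X BZ2] := to_set1 B BP.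
apply: connect_trans AZ1 _; apply: connect_trans (along z1 z2 (connX z1 z2 z1X z2X)) _.
by rewrite Rsym.
Qed.

Lemma convex_IH_closed S T X : is_tree S -> symmetric T ->
  induces_connected T X -> IH_closed T X ->
  (forall u v, T u v -> convex S (IH H [set u; v])) -> convex S X.
Proof.
move=> trS Tsym connX closedX convIH; rewrite -(cover_edge_closures closedX).
apply: convex_cover (edge_closures_connected Tsym connX) _ => // A.
case/edge_closuresP=> [[u [v [Tuv _ _ ->]]] | [z _ ->]]; first exact: convIH.
by apply: convex_card_le1; rewrite ?cards1.
Qed.

Lemma obtainable_convex T X : host_tree H T -> obtainable H X ->
  convex T X /\ IH_closed T X.
Proof.
case=> trT connH; elim=> [F FH | A B _ [convA closedA] _ [convB closedB] _ | P _ _ IHP connP].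
- by split; [apply/(convexP trT)/connH | apply: IH_closed_edge].
- split; first exact: convexI.
  by move=> u v Tuv /setIP [uA uB] /setIP [vA vB]; rewrite subsetI closedA ?closedB.
- have convP A : A \in P -> convex T A by case/IHP.
  split; first exact: convex_cover.
  move=> u v Tuv uP vP.
  have [A AP /andP [uA vA]] := convex_cover_edge trT connP convP Tuv uP vP
    (side_refl T u v) (side_refl T v u).
  by apply: subset_trans ((IHP A AP).2 u v Tuv uA vA) _; apply: bigcup_sup.
Qed.

Lemma Nedge_common_edge T u v y : host_tree H T -> T u v ->
  u \in Nedge y -> v \in Nedge y -> exists2 G, G \in H & [&& u \in G, v \in G & y \in G].
Proof.
case=> trT connH Tuv /NedgeP [F FH /andP [yF uF]] /NedgeP [G GH /andP [yG vG]].
have convH A : A \in H -> convex T A by move=> AH; apply/(convexP trT)/connH.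
case/orP: (side_cover trT y Tuv) => yS.
- by exists G; rewrite // vG yG (convH G GH u v y v Tuv yG vG yS (side_refl T v u)).
- exists F; rewrite // uF yF (convH F FH v u y u) //; first by rewrite tree_sym.
  exact: side_refl.
Qed.

Lemma edge_swap_Nhost T u v x : host_tree H T -> T u v -> x \in side T u v ->
  (forall y, u \in Nedge y -> v \in Nedge y -> x \in Nedge y) ->
  host_tree (Nhyp H) (edge_swap T u v x).
Proof.
case=> trT connH Tuv xS uvx; split; first exact: edge_swap_tree.
move=> _ /imsetP [y _ ->]; apply: edge_swap_induced_connected => //; last exact: uvx.
apply/(convexP trT)/convex_Nedge => // F FH; exact/(convexP trT)/connH.
Qed.

Definition edge_condition T := forall u v, T u v -> forall x, x \notin IH H [set u; v] ->
  exists y, (exists2 F, F \in H & [set u; v; y] \subset F) /\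
            (forall F, F \in H -> ~~ ([set x; y] \subset F)).

Lemma edge_condition_Nseparated T u v : edge_condition T -> T u v ->
  Nseparated (IH H [set u; v]).
Proof.
move=> cond Tuv x xI; have [y [[G GH uvyG] noF]] := cond u v Tuv x xI.
exists y; split=> //; exists G; rewrite // subUset sub1set.
move: uvyG; rewrite !subUset !sub1set => /andP [/andP [uG vG] ->].
by apply: IH_subset; rewrite // subUset !sub1set uG vG.
Qed.

Definition basic_set_condition := forall B, basic_set H B -> Nseparated B.

Lemma basic_of_edge_condition T : host_tree H T -> edge_condition T -> basic_hypertree H.
Proof.
move=> hostT cond; apply/basic_hypertreeE; first by exists T.
move=> S hostS; have [trS _] := hostS; have [trT connH] := hostT.
split=> // F FH; apply/(convexP trS).
apply: (convex_IH_closed trS (tree_sym trT) (connH F FH) (IH_closed_edge FH)).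
by move=> u v Tuv; apply: Nseparated_convex hostS (edge_condition_Nseparated cond Tuv).
Qed.

Lemma edge_condition_of_basic T : host_tree H T -> basic_hypertree H -> edge_condition T.
Proof.
move=> hostT [_ equivN] u v Tuv x xI; have [trT _] := hostT.
have [F0 F0H /andP [uvF0 xF0]] := notin_IH xI.
move: uvF0; rewrite subUset !sub1set => /andP [uF0 vF0].
apply: NNPP => noy.
have uvx y : u \in Nedge y -> v \in Nedge y -> x \in Nedge y.
  move=> uN vN; have [G GH uvyG] := Nedge_common_edge hostT Tuv uN vN.
  apply: contraT => xNy; exfalso; apply: noy; exists y; split.
    by exists G; rewrite // !subUset !sub1set -andbA.
  move=> F FH; apply: contra xNy; rewrite subUset !sub1set => /andP [xF yF].
  by apply/NedgeP; exists F; rewrite // xF yF.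
have swapped a b : T a b -> x \in side T a b -> a \in F0 -> b \in F0 ->
    (forall y, a \in Nedge y -> b \in Nedge y -> x \in Nedge y) -> False.
  move=> Tab xS aF0 bF0 abx.
  have /equivN [_ connS] := edge_swap_Nhost hostT Tab xS abx.
  by move: (edge_swap_separates trT Tab xS aF0 bF0 xF0); rewrite connS.
case/orP: (side_cover trT x Tuv) => xS; first exact: swapped Tuv xS uF0 vF0 uvx.
by apply: (swapped v u) => // [|y vN uN]; [rewrite tree_sym | apply: uvx].
Qed.

Lemma comp_edge_convex S X : host_tree (Nhyp H) S -> basic_set_condition ->
  comp_edge H X -> convex S X.
Proof.
move=> hostS cond; have [trS _] := hostS.
have [n] := ubnP #|X|; elim: n X => // n IHn X /ltnSE Xn compX.
have [X1 | X1] := leqP #|X| 1; first exact: convex_card_le1.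
case: (classic (basic_set H X)) => [/cond/(Nseparated_convex hostS) // | notbasic].
have [P [_ connP coverP subP]] : exists P : {set {set V}},
    [/\ P != set0, family_connected P, cover P = X &
        forall A, A \in P -> comp_edge H A /\ A \proper X].
  by apply: NNPP => noP; apply: notbasic.
rewrite -coverP; apply: (convex_cover trS connP) => A /subP [compA /proper_card ltAX].
exact: IHn (leq_trans ltAX Xn) compA.
Qed.

Lemma basic_of_basic_set_condition :
  hypertree H -> basic_set_condition -> basic_hypertree H.
Proof.
move=> hyperH cond; apply/basic_hypertreeE => // S hostS; have [trS _] := hostS.
split=> // F FH; apply/(convexP trS).
have [-> | FT] := eqVneq F [set: V]; first exact: convexT.
by apply: comp_edge_convex => //; right; right; rewrite properT FT; split; last exact: obt_edge.
Qed.

Lemma basic_set_condition_of_basic T : host_tree H T -> basic_hypertree H ->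
  basic_set_condition.
Proof.
move=> hostT basicH B [compB [B1 notdecomp]]; have [trT _] := hostT.
case: compB => [-> a | [B1' | [BT oB]]]; [by rewrite inE | by rewrite B1' in B1 |].
have [convB closedB] := obtainable_convex hostT oB.
case: (classic (exists u v, [/\ T u v, u \in B, v \in B & B \subset IH H [set u; v]]))
  => [[u [v [Tuv uB vB BI]]] | noedge].
  have -> : B = IH H [set u; v] by apply/eqP; rewrite eqEsubset BI closedB.
  exact: edge_condition_Nseparated (edge_condition_of_basic hostT basicH) Tuv.
case: notdecomp; exists (edge_closures T B); split.
- have [z zB] : exists z, z \in B by apply/set0Pn; rewrite -card_gt0 ltnW.
  by apply/set0Pn; exists [set z]; apply: set1_edge_closures.
- exact: edge_closures_connected (tree_sym trT) (convex_connected trT convB).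
- exact: cover_edge_closures.
move=> A /edge_closuresP [[u [v [Tuv uB vB ->]]] | [z zB ->]].
- have IB : IH H [set u; v] \proper B.
    by rewrite properE closedB //=; apply/negP => BI; apply: noedge; exists u, v.
  split=> //; right; right; split; first exact: proper_sub_trans IB (proper_sub BT).
  apply: obtainable_IH; first by apply/set0Pn; exists u; rewrite set21.
  exact: proper_sub_trans IB (proper_sub BT).
- by split; [right; left; rewrite cards1 | rewrite properEcard sub1set zB cards1].
Qed.

Lemma edge_conditionP T : host_tree H T -> basic_hypertree H <-> edge_condition T.
Proof.
by move=> hostT; split; [apply: edge_condition_of_basic | apply: basic_of_edge_condition].
Qed.

Lemma basic_set_conditionP T : host_tree H T -> basic_hypertree H <-> basic_set_condition.
Proof.
move=> hostT; split; first exact: basic_set_condition_of_basic hostT.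
by apply: basic_of_basic_set_condition; exists T.
Qed.

End Hypergraph.

Theorem mainTheorem8 (V : finType) (H : {set {set V}})
  (H_nonempty : forall F, F \in H -> F != set0)
  (H_hyper : hypertree H) (T : rel V) (HT : host_tree H T) :
  (basic_hypertree H <->
     (forall u v, T u v -> forall x, x \notin IH H [set u; v] ->
        exists y, (exists2 F, F \in H & [set u; v; y] \subset F) /\
                  (forall F, F \in H -> ~~ ([set x; y] \subset F))))
  /\
  (basic_hypertree H <->
     (forall B, basic_set H B -> forall x, x \notin B ->
        exists y, (exists2 F, F \in H & y |: B \subset F) /\
                  (forall F, F \in H -> ~~ ([set x; y] \subset F)))).
Proof.
by split; [apply: edge_conditionP | apply: basic_set_conditionP HT].
Qed.
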